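(* Let $\mathbf M=(M,N)$ be a flag matroid of rank $(1,n-1)$ on $[n]$. The polytope $P_{\mathbf M}$ is contained in the boundary of $\Delta(1,n-1;n)$ if and only if there is no element $i\in[n]$ which is neither a loop of $M$ nor a coloop of $N$.
   Context: A flag matroid $(M,N)$ of rank $(1,n-1)$: $M$ a rank-1 matroid, $N$ a rank-$(n-1)$ matroid on $[n]$, every flat of $M$ being a flat of $N$. With $e_B=\sum_{i\in B}e_i$, $P_{\mathbf M}=\operatorname{conv}\{e_i:\{i\}\text{ basis of }M\}+\operatorname{conv}\{e_B:B\text{ basis of }N\}$, and $\Delta(1,n-1;n)$ is the polytope of the flag of uniform matroids $(U_{1,n},U_{n-1,n})$, i.e. $\Delta(1,n)+\Delta(n-1,n)$ where $\Delta(d,n)=\operatorname{conv}\{e_B:|B|=d\}$ (both may be translated by $-(1,\dots,1)$; boundary is taken relative to the affine hull of $\Delta(1,n-1;n)$). *)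

From HB Require Import structures.
From mathcomp Require Import all_boot all_order all_algebra.
From mathcomp Require Import boolp classical_sets reals.
Set Implicit Arguments. Unset Strict Implicit. Unset Printing Implicit Defensive.
Import Order.TTheory GRing.Theory Num.Theory.
Local Open Scope ring_scope.
Local Open Scope classical_set_scope.

Record matroid (n : nat) := Matroid {
  bases : {set {set 'I_n}};
  bases_nonempty : bases != finset.set0;
  bases_exchange : forall B1 B2, B1 \in bases -> B2 \in bases ->
    forall x, x \in B1 :\: B2 ->
      exists2 y, y \in B2 :\: B1 & (y |: (B1 :\ x)) \in bases
}.

Definition mrank n (M : matroid n) (A : {set 'I_n}) : nat :=
  (\max_(B in bases M) #|A :&: B|)%N.

Definition matroid_rank n (M : matroid n) : nat := mrank M [set: 'I_n]%SET.

Definition is_flat n (M : matroid n) (F : {set 'I_n}) : Prop :=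
  forall e, e \notin F -> (mrank M F < mrank M (e |: F))%N.

Definition is_loop n (M : matroid n) (i : 'I_n) : Prop :=
  forall B, B \in bases M -> i \notin B.

Definition is_coloop n (M : matroid n) (i : 'I_n) : Prop :=
  forall B, B \in bases M -> i \in B.

Definition is_flag n (M N : matroid n) : Prop :=
  forall F, is_flat M F -> is_flat N F.

Section Poly.
Variable R : realType.
Variable n : nat.

Definition vec := 'rV[R]_n.

Definition eB (B : {set 'I_n}) : vec := \row_i (if i \in B then 1 else 0).

Definition conv_eB (S : {set {set 'I_n}}) : set vec :=
  [set x | exists l : {set 'I_n} -> R,
      (forall B, 0 <= l B) /\ (forall B, B \notin S -> l B = 0) /\
      \sum_B l B = 1 /\ x = \sum_B l B *: eB B].

Definition msum (P Q : set vec) : set vec :=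
  [set x | exists p q, P p /\ Q q /\ x = p + q].

Definition hypersimplex (d : nat) : set vec :=
  conv_eB (finset (fun B : {set 'I_n} => #|B| == d)).

Definition Delta_1_nm1 : set vec := msum (hypersimplex 1) (hypersimplex (n - 1)).

Definition flag_polytope (M N : matroid n) : set vec :=
  msum (conv_eB (bases M)) (conv_eB (bases N)).

Definition aff_hull (P : set vec) : set vec :=
  [set x | exists (k : nat) (p : 'I_k -> vec) (mu : 'I_k -> R),
      (forall j, P (p j)) /\ \sum_j mu j = 1 /\ x = \sum_j mu j *: p j].

Definition close (x y : vec) (e : R) : Prop := forall i, `|y 0 i - x 0 i| < e.

Definition rel_boundary (P : set vec) : set vec :=
  [set x | aff_hull P x /\ forall e : R, 0 < e ->
      (exists y, P y /\ close x y e) /\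
      (exists y, aff_hull P y /\ ~ P y /\ close x y e)].
End Poly.

From HB Require Import structures.
From mathcomp Require Import all_boot all_order all_algebra.
From mathcomp Require Import boolp classical_sets reals.
From mathcomp Require Import lra zify.
Set Implicit Arguments. Unset Strict Implicit. Unset Printing Implicit Defensive.
Import Order.TTheory GRing.Theory Num.Theory.

(* For ranks (1, n-1), the bases of M are the singletons {i} with i not a loop
   of M, and the bases of N are the complements [n] \ {j} with j not a coloop
   of N.  If every element is a loop of M or a coloop of N, the non-loops A of M
   lie in every base of N, so on all of P_M the linear form sum_(i in A) x_i
   takes its maximum 1 + |A| over Delta(1,n-1;n); moving a point of P_M along
   e_a - e_b (a in A, b not in A) leaves Delta inside its affine hull.
   Conversely, an element i that is neither a loop of M nor a coloop of N is
   never the only one: otherwise the loops of M form a flat of M whose N-rank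
   does not grow when i is added.  Two such elements i, j put
   (1,...,1) = (e_i + e_j + e_([n]\i) + e_([n]\j)) / 2 in P_M, and (1,...,1)
   is a relative interior point of Delta(1,n-1;n). *)

Section MatroidBases.
Variables (n : nat) (M : matroid n).

Lemma card_bases_leq B1 B2 : B1 \in bases M -> B2 \in bases M -> #|B1| <= #|B2|.
Proof.
move: {2}#|B1 :\: B2| (erefl #|B1 :\: B2|) => k.
elim: k B1 => [|k IHk] B1 cardD B1M B2M.
  by apply: subset_leq_card; rewrite -finset.setD_eq0 -cards_eq0 cardD.
have /set0Pn [x xB1B2] : B1 :\: B2 != finset.set0 by rewrite -card_gt0 cardD.
have [y yB2B1 B1'M] := bases_exchange B1M B2M xB1B2.
move: xB1B2 yB2B1; rewrite !inE => /andP [xB2 xB1] /andP [yB1 yB2].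
have -> : #|B1| = #|y |: (B1 :\ x)|.
  by rewrite cardsU1 !inE (negbTE yB1) andbF (cardsD1 x B1) xB1.
apply: IHk B1'M B2M.
have -> : (y |: B1 :\ x) :\: B2 = (B1 :\: B2) :\ x.
  apply/setP => z; rewrite !inE.
  by case: (eqVneq z y) => [->|_] /=; rewrite ?yB2 ?andbF // andbCA.
by apply: succn_inj; rewrite -cardD (cardsD1 x (B1 :\: B2)) !inE xB2 xB1.
Qed.

Lemma card_base B : B \in bases M -> #|B| = matroid_rank M.
Proof.
move=> BM; apply/eqP; rewrite eqn_leq; apply/andP; split.
  by apply: leq_trans (leq_bigmax_cond _ BM); rewrite finset.setTI.
apply/bigmax_leqP => B' B'M; rewrite finset.setTI; exact: card_bases_leq.
Qed.

End MatroidBases.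

Lemma rank1_base_set1 n (M : matroid n) B :
  matroid_rank M = 1 -> B \in bases M -> exists a, B = [set a].
Proof. by move=> rM BM; apply/cards1P; rewrite (card_base BM) rM. Qed.

Lemma rank1_loopP n (M : matroid n) i :
  matroid_rank M = 1 -> reflect (is_loop M i) ([set i] \notin bases M).
Proof.
move=> rM; apply: (iffP idP) => [iNM B BM | iloop]; last first.
  by apply/negP => /iloop; rewrite set11.
have [a Ba] := rank1_base_set1 rM BM.
by apply: contra iNM; rewrite Ba inE => /eqP ->; rewrite -Ba.
Qed.

Lemma corank1_base_eq_setC1 n (N : matroid n) B i :
  matroid_rank N = (n - 1)%N -> B \in bases N -> i \notin B -> B = ~: [set i].
Proof.
move=> rN BN iB; apply/eqP; rewrite eqEcard cardsC1 card_ord (card_base BN) rN subn1 leqnn andbT.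
by apply/fintype.subsetP => k kB; rewrite !inE; apply: contraNneq iB => <-.
Qed.

Lemma corank1_base_setC1 n (N : matroid n) B :
  matroid_rank N = (n - 1)%N -> (0 < n)%N -> B \in bases N -> exists j, B = ~: [set j].
Proof.
move=> rN n_gt0 BN; have /set0Pn [j jNB] : ~: B != finset.set0.
  by rewrite -card_gt0; have := cardsC B; rewrite (card_base BN) rN card_ord; lia.
by exists j; apply: corank1_base_eq_setC1 rN BN _; rewrite inE in jNB.
Qed.

Lemma corank1_coloopP n (N : matroid n) i :
  matroid_rank N = (n - 1)%N -> reflect (is_coloop N i) (~: [set i] \notin bases N).
Proof.
move=> rN; apply: (iffP idP) => [iNN B BN | icoloop]; last first.
  by apply/negP => /icoloop; rewrite !inE eqxx.
by apply: contraR iNN => iB; rewrite -(corank1_base_eq_setC1 rN BN iB).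
Qed.

Section Polytopes.
Variables (R : realType) (n : nat).
Local Open Scope ring_scope.
Implicit Types (A B : {set 'I_n}) (S : {set {set 'I_n}}) (x y : vec R n).

Definition coord_sum A x : R := \sum_(i in A) x 0 i.

Lemma coord_sumD A x y : coord_sum A (x + y) = coord_sum A x + coord_sum A y.
Proof. by rewrite /coord_sum -big_split; apply: eq_bigr => i _; rewrite mxE. Qed.

Lemma coord_sumZ A a x : coord_sum A (a *: x) = a * coord_sum A x.
Proof. by rewrite /coord_sum mulr_sumr; apply: eq_bigr => i _; rewrite mxE. Qed.

Lemma coord_sum_sum (I : finType) A (f : I -> vec R n) :
  coord_sum A (\sum_j f j) = \sum_j coord_sum A (f j).
Proof. by rewrite /coord_sum exchange_big; apply: eq_bigr => i _; rewrite summxE. Qed.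

Lemma eBE B i : eB R B 0 i = (i \in B)%:R.
Proof. by rewrite mxE; case: (i \in B). Qed.

Lemma coord_sum_eB A B : coord_sum A (eB R B) = #|A :&: B|%:R.
Proof.
rewrite /coord_sum; under eq_bigr do rewrite eBE.
rewrite -sum1_card natr_sum big_mkcond [RHS]big_mkcond /=.
by apply: eq_bigr => i _; rewrite !inE; case: (i \in A); case: (i \in B).
Qed.

Lemma conv_eB_coord_sum S A x : conv_eB S x ->
  exists2 l : {set 'I_n} -> R, (forall B, 0 <= l B) /\ (forall B, B \notin S -> l B = 0)
    /\ \sum_B l B = 1 & coord_sum A x = \sum_B l B * #|A :&: B|%:R.
Proof.
case=> l [l_ge0 [lS [l1 ->]]]; exists l => //.
by rewrite coord_sum_sum; apply: eq_bigr => B _; rewrite coord_sumZ coord_sum_eB.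
Qed.

Lemma conv_eB_coord_sum_eq S A c x : (forall B, B \in S -> #|A :&: B| = c) ->
  conv_eB S x -> coord_sum A x = c%:R.
Proof.
move=> Sc /(conv_eB_coord_sum A) [l [_ [lS l1]] ->].
have -> : c%:R = \sum_B l B * c%:R :> R by rewrite -mulr_suml l1 mul1r.
apply: eq_bigr => B _.
by case: (boolP (B \in S)) => [/Sc -> // | /lS ->]; rewrite !mul0r.
Qed.

Lemma conv_eB_coord_sum_le S A c x : (forall B, B \in S -> #|A :&: B| <= c)%N ->
  conv_eB S x -> coord_sum A x <= c%:R.
Proof.
move=> Sc /(conv_eB_coord_sum A) [l [l_ge0 [lS l1]] ->].
have -> : c%:R = \sum_B l B * c%:R :> R by rewrite -mulr_suml l1 mul1r.
apply: ler_sum => B _.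
case: (boolP (B \in S)) => [BS | /lS ->]; last by rewrite !mul0r.
by rewrite ler_wpM2l // ler_nat; exact: Sc.
Qed.

Lemma conv_eB_sub S S' x : S \subset S' -> conv_eB S x -> conv_eB S' x.
Proof.
move=> sSS' [l [l_ge0 [lS lx]]]; exists l; do !split=> //.
by move=> B BS'; apply: lS; apply: contra BS'; apply: (fintype.subsetP sSS').
Qed.

Lemma conv_eB_comb (I : finType) S (w : I -> R) (g : I -> {set 'I_n}) :
  (forall j, 0 <= w j) -> \sum_j w j = 1 -> (forall j, g j \in S) ->
  conv_eB S (\sum_j w j *: eB R (g j)).
Proof.
move=> w_ge0 w1 gS; exists (fun B => \sum_(j | g j == B) w j); split; [|split; [|split]].
- by move=> B; apply: sumr_ge0.
- by move=> B BS; apply: big1 => j /eqP gjB; move: BS; rewrite -gjB gS.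
- by rewrite -w1 (partition_big g xpredT).
- rewrite (partition_big g xpredT) //=; apply: eq_bigr => B _.
  by rewrite scaler_suml; apply: eq_bigr => j /eqP ->.
Qed.

Lemma conv_eB_vertex S B : B \in S -> conv_eB S (eB R B).
Proof.
move=> BS; have := @conv_eB_comb 'I_1 S (fun _ => 1) (fun _ => B).
by rewrite !big_ord1 scale1r; apply.
Qed.

Lemma coord_sumB A x y : coord_sum A (x - y) = coord_sum A x - coord_sum A y.
Proof. by rewrite coord_sumD -scaleN1r coord_sumZ mulN1r. Qed.

Lemma sum_eB_set1E (w : 'I_n -> R) m : (\sum_k w k *: eB R [set k]) 0 m = w m.
Proof.
rewrite summxE (bigD1 m) //= big1 => [|k km]; first by rewrite mxE eBE inE eqxx mulr1 addr0.
by rewrite mxE eBE inE eq_sym (negbTE km) mulr0.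
Qed.

Lemma sum_eB_setC1E (w : 'I_n -> R) m :
  (\sum_k w k *: eB R (~: [set k])) 0 m = \sum_k w k - w m.
Proof.
rewrite summxE [X in _ = X - _](bigD1 m) //= (bigD1 m) //= mxE eBE !inE eqxx mulr0 add0r.
rewrite addrC addrK; apply: eq_bigr => k km.
by rewrite mxE eBE !inE eq_sym km mulr1.
Qed.

Lemma aff_hull_mem (P : set (vec R n)) x : P x -> aff_hull P x.
Proof.
by move=> Px; exists 1%N, (fun _ => x), (fun _ => 1); rewrite !big_ord1 scale1r.
Qed.

Lemma aff_hull_coord_sum (P : set (vec R n)) A c y :
  (forall z, P z -> coord_sum A z = c) -> aff_hull P y -> coord_sum A y = c.
Proof.
move=> Pc [k [p [mu [Pp [mu1 ->]]]]]; rewrite coord_sum_sum.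
under eq_bigr do rewrite coord_sumZ Pc //.
by rewrite -mulr_suml mu1 mul1r.
Qed.

End Polytopes.

Section Hypersimplex.
Variables (R : realType) (n : nat).
Local Open Scope ring_scope.
Implicit Types (a b c d : 'I_n) (A : {set 'I_n}) (x y z : vec R n).
Notation Delta := (@Delta_1_nm1 R n).

Lemma Delta_vertex c d : Delta (eB R [set c] + eB R (~: [set d])).
Proof.
exists (eB R [set c]), (eB R (~: [set d])); split; [|split=> //].
  by apply: conv_eB_vertex; rewrite inE cards1.
by apply: conv_eB_vertex; rewrite inE cardsC1 card_ord subn1.
Qed.

Lemma coord_sum_Delta_le A z : Delta z -> coord_sum A z <= 1 + #|A|%:R.
Proof.
case=> p [q [p1 [qn1 ->]]]; rewrite coord_sumD; apply: lerD.
  apply: (conv_eB_coord_sum_le (c := 1%N)) p1 => B; rewrite inE => /eqP <-.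
  by rewrite subset_leq_card // finset.subsetIr.
by apply: (conv_eB_coord_sum_le (c := #|A|)) qn1 => B _; rewrite subset_leq_card // finset.subsetIl.
Qed.

Lemma coord_sum_Delta z : (0 < n)%N -> Delta z -> coord_sum [set: 'I_n] z = n%:R.
Proof.
move=> n_gt0 [p [q [p1 [qn1 ->]]]]; rewrite coord_sumD.
rewrite (conv_eB_coord_sum_eq (c := 1%N) _ p1); last by move=> B; rewrite inE finset.setTI => /eqP.
rewrite (conv_eB_coord_sum_eq (c := (n - 1)%N) _ qn1); last by move=> B; rewrite inE finset.setTI => /eqP.
by rewrite -natrD subnKC.
Qed.

Lemma eB_vertex_diff a b :
  eB R [set a] + eB R (~: [set b]) - (eB R [set b] + eB R (~: [set a])) =
  2 *: (eB R [set a] - eB R [set b]).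
Proof.
apply/rowP => k; rewrite !mxE !inE.
by case: (k == a); case: (k == b); rewrite /= ?subrr ?add0r ?addr0 ?subr0 ?sub0r; lra.
Qed.

Lemma Delta_face_rel_boundary A a b x : a \in A -> b \notin A -> Delta x ->
  coord_sum A x = 1 + #|A|%:R -> rel_boundary Delta x.
Proof.
move=> aA bA Dx xmax; split=> [|e e_gt0]; first exact: aff_hull_mem.
split; first by exists x; split=> // k; rewrite subrr normr0.
pose v := eB R [set a] - eB R [set b].
exists (x + (e / 2) *: v); split; [|split].
- exists 3%N, (tnth [tuple x; eB R [set a] + eB R (~: [set b]); eB R [set b] + eB R (~: [set a])]),
    (tnth [tuple 1; e / 4; - (e / 4)]).
  split; [|split].
  + by move=> j; rewrite (tnth_nth x) /=; case: j => [[|[|[|]]]] //= _; apply: Delta_vertex.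
  + by rewrite !big_ord_recr big_ord0 /= !(tnth_nth 0) /=; lra.
  + rewrite !big_ord_recr big_ord0 /= !(tnth_nth 0) /= add0r scale1r.
    by rewrite -addrA scaleNr -scalerBr eB_vertex_diff scalerA; congr (_ + _ *: _); lra.
- move=> /(coord_sum_Delta_le A); rewrite coord_sumD coord_sumZ xmax coord_sumB !coord_sum_eB.
  have -> : A :&: [set a] = [set a] by apply/finset.setIidPr; rewrite finset.sub1set.
  have -> : A :&: [set b] = finset.set0.
    by apply/setP => k; rewrite !inE; case: (eqVneq k b) => [->|]; rewrite ?andbF ?(negbTE bA).
  by rewrite cards1 finset.cards0; lra.
- move=> k; rewrite !mxE addrAC subrr add0r normrM gtr0_norm ?divr_gt0 //.
  have ab : a != b by apply: contraNneq bA => <-.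
  rewrite !inE; case: (eqVneq k a) => [->|_]; first by rewrite (negbTE ab) subr0 normr1; lra.
  by case: (k == b); rewrite /= ?subr0 ?sub0r ?normrN ?normr1 ?normr0; lra.
Qed.

Lemma Delta_near_ones y : (0 < n)%N -> aff_hull Delta y ->
  (forall k, `|y 0 k - 1| < n%:R^-1) -> Delta y.
Proof.
move=> n_gt0 yaff near1; pose d k := y 0 k - 1.
have d_small k : - n%:R^-1 < d k < n%:R^-1 by rewrite -ltr_norml near1.
have sum_d : \sum_k d k = 0.
  rewrite sumrB sumr_const card_ord.
  have := aff_hull_coord_sum (coord_sum_Delta ^~ n_gt0) yaff.
  by rewrite /coord_sum => <-; under [X in _ - X]eq_bigl do rewrite inE; rewrite subrr.
have sum_inv : \sum_(k < n) n%:R^-1 = 1 :> R.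
  by rewrite sumr_const card_ord -[_ *+ n]mulr_natr mulVf // pnatr_eq0 -lt0n.
exists (\sum_k (n%:R^-1 + d k / 2) *: eB R [set k]),
  (\sum_k (n%:R^-1 - d k / 2) *: eB R (~: [set k])); split; [|split].
- apply: conv_eB_comb => [k||k]; last by rewrite inE cards1.
    by have := d_small k; lra.
  by rewrite big_split /= sum_inv -mulr_suml sum_d mul0r addr0.
- apply: conv_eB_comb => [k||k]; last by rewrite inE cardsC1 card_ord subn1.
    by have := d_small k; lra.
  by rewrite sumrB sum_inv -mulr_suml sum_d mul0r subr0.
- apply/rowP => m; rewrite mxE sum_eB_set1E sum_eB_setC1E.
  rewrite sumrB sum_inv -mulr_suml sum_d mul0r subr0 /d; lra.
Qed.

Lemma ones_notin_rel_boundary : (0 < n)%N -> ~ rel_boundary Delta (const_mx 1).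
Proof.
move=> n_gt0 [_ /(_ n%:R^-1)]; rewrite invr_gt0 ltr0n => /(_ n_gt0) [_ [y [yaff [yND near1]]]].
by apply/yND/Delta_near_ones => // k; have := near1 k; rewrite mxE.
Qed.

End Hypersimplex.

Section FlagMatroid.
Variables (n : nat) (M N : matroid n).
Local Open Scope ring_scope.

Lemma ones_in_flag_polytope (R : realType) i j : i != j ->
  [set i] \in bases M -> [set j] \in bases M ->
  ~: [set i] \in bases N -> ~: [set j] \in bases N ->
  flag_polytope M N (const_mx 1 : vec R n).
Proof.
move=> ij iM jM iN jN.
exists (\sum_(t : bool) 2^-1 *: eB R (if t then [set i] else [set j])),
  (\sum_(t : bool) 2^-1 *: eB R (if t then ~: [set i] else ~: [set j])).
split; [|split].
- by apply: conv_eB_comb => [_||[]] //; rewrite ?big_bool /=; lra.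
- by apply: conv_eB_comb => [_||[]] //; rewrite ?big_bool /=; lra.
- apply/rowP => k; rewrite !mxE !big_bool /= !mxE !inE.
  by case: (eqVneq k i) => [->|]; rewrite ?(negbTE ij) //=; case: (k == j) => /=; lra.
Qed.

Hypothesis rM : matroid_rank M = 1%N.
Hypothesis rN : matroid_rank N = (n - 1)%N.

Lemma flag_polytope_sub_Delta (R : realType) :
  (@flag_polytope R n M N `<=` @Delta_1_nm1 R n)%classic.
Proof.
move=> _ [p [q [pM [qN ->]]]]; exists p, q; split; [|split=> //].
- by apply: conv_eB_sub pM; apply/fintype.subsetP => B BM; rewrite inE (card_base BM) rM.
- by apply: conv_eB_sub qN; apply/fintype.subsetP => B BN; rewrite inE (card_base BN) rN.
Qed.

Lemma loops_flat : is_flat M [set k | [set k] \notin bases M].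
Proof.
set L := [set k | _]; move=> e; rewrite inE negbK => eM.
have -> : mrank M L = 0%N.
  apply/eqP; rewrite -leqn0; apply/bigmax_leqP => B BM.
  have [a Ba] := rank1_base_set1 rM BM.
  rewrite leqn0 cards_eq0 Ba; apply/eqP/setP => k; rewrite !inE.
  by case: (eqVneq k a) => [->|]; rewrite ?andbF // -Ba BM.
apply: leq_trans (leq_bigmax_cond _ eM); rewrite card_gt0.
by apply/set0Pn; exists e; rewrite !inE eqxx.
Qed.

Lemma flag_free_element_not_unique i : is_flag M N ->
  [set i] \in bases M -> ~: [set i] \in bases N ->
  exists2 j, j != i & ([set j] \in bases M) && (~: [set j] \in bases N).
Proof.
move=> flag iM iN.
case: (pickP (fun j => [&& j != i, [set j] \in bases M & ~: [set j] \in bases N])).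
  by move=> j /and3P [ji jM jN]; exists j => //; rewrite jM.
move=> unique; set L := [set k | [set k] \notin bases M].
have iL : i \notin L by rewrite inE negbK.
suff : (mrank N (i |: L) <= mrank N L)%N by rewrite leqNgt (flag _ loops_flat i iL).
have n_gt0 : (0 < n)%N by apply: leq_ltn_trans (ltn_ord i).
apply/bigmax_leqP => B BN; have [j BE] := corank1_base_setC1 rN n_gt0 BN; subst B.
have jiL : j \in i |: L.
  rewrite !inE; case: (eqVneq j i) => //= ji; move: (unique j); rewrite ji /=.
  by rewrite BN andbT => ->.
apply: leq_trans (leq_bigmax_cond _ iN).
have -> : L :&: ~: [set i] = L.
  by apply/finset.setIidPl/fintype.subsetP => k kL; rewrite !inE; apply: contraTneq kL => ->.
by rewrite -finset.setDE; have := cardsD1 j (i |: L); rewrite jiL cardsU1 iL; lia.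
Qed.

Lemma flag_polytope_rel_boundary (R : realType) :
  (forall i, [set i] \in bases M -> ~: [set i] \notin bases N) ->
  (@flag_polytope R n M N `<=` rel_boundary (@Delta_1_nm1 R n))%classic.
Proof.
move=> no_free x [p [q [pM [qN ->]]]] {x}; set A := [set i | [set i] \in bases M].
have /set0Pn [B0 B0M] := bases_nonempty M.
have [a Ba] := rank1_base_set1 rM B0M.
have n_gt0 : (0 < n)%N by apply: leq_ltn_trans (ltn_ord a).
have /set0Pn [C0 C0N] := bases_nonempty N.
have [b Cb] := corank1_base_setC1 rN n_gt0 C0N.
have cardAM B : B \in bases M -> #|A :&: B| = 1%N.
  move=> BM; have [c Bc] := rank1_base_set1 rM BM.
  by rewrite Bc (finset.setIidPr _) ?cards1 // finset.sub1set inE -Bc.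
have cardAN B : B \in bases N -> #|A :&: B| = #|A|.
  move=> BN; have [j Bj] := corank1_base_setC1 rN n_gt0 BN.
  rewrite (finset.setIidPl _) //; apply/fintype.subsetP => k; rewrite Bj !inE => kM.
  by apply: contraTneq kM => ->; apply: contraL (no_free j) _; rewrite -Bj.
apply: (@Delta_face_rel_boundary R n A a b).
- by rewrite inE -Ba.
- by rewrite inE; apply: contraL (no_free b) _; rewrite -Cb.
- by apply: flag_polytope_sub_Delta; exists p, q.
- by rewrite coord_sumD (conv_eB_coord_sum_eq cardAM pM) (conv_eB_coord_sum_eq cardAN qN).
Qed.

End FlagMatroid.

Local Open Scope classical_set_scope.

Theorem proposition6p2 (R : realType) (n : nat) (M N : matroid n) :
  matroid_rank M = 1%N -> matroid_rank N = (n - 1)%N -> is_flag M N ->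
  (@flag_polytope R n M N `<=` rel_boundary (@Delta_1_nm1 R n) <->
   ~ (exists i : 'I_n, ~ is_loop M i /\ ~ is_coloop N i)).
Proof.
move=> rM rN flag; split.
- move=> PM_bd [i [/(rank1_loopP i rM) iM /(corank1_coloopP i rN) iN]].
  have [j ji /andP [jM jN]] := flag_free_element_not_unique rM rN flag iM iN.
  have n_gt0 : (0 < n)%N by apply: leq_ltn_trans (ltn_ord i).
  exact/(ones_notin_rel_boundary n_gt0)/PM_bd/(ones_in_flag_polytope R ji jM iM jN iN).
- move=> no_free; apply: (flag_polytope_rel_boundary rM rN) => i iM.
  apply/negP => iN; apply: no_free; exists i.
  by split; [apply/(rank1_loopP i rM); rewrite iM | apply/(corank1_coloopP i rN); rewrite iN].
Qed.
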